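(* Let $G$ be a real $n\times m$ matrix and $\mathbf v\in\mathbb R^n$, and let $\mathcal G=\{x\in\mathbb R^m: Gx\le \mathbf v\}$ (componentwise). Let $P$ be the nonnegative orthant of $\mathbb R^n$ and $F=\mathcal R(G)$. Write $\mathbf v=\mathbf v_F+\upsilon$, where $\mathbf v_F$ is the orthogonal projection of $\mathbf v$ onto $F$ and $\upsilon$ is the orthogonal projection of $\mathbf v$ onto $F^\perp$. Assume $\upsilon\neq0$, $F\cap P=\{0\}$, and $\mathcal G\neq\emptyset$. Let $C_e=\{t\upsilon+z:t\ge0,\ z\in F\}$ and $P_c=(\mathbf v+F)\cap P$. Then $$\mathrm{Co}(P_c)=C_e\cap P,$$ where $\mathrm{Co}(S)$ denotes the convex cone generated by the set $S$, i.e. the set of all finite nonnegative linear combinations of elements of $S$.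
   Context: $P_c$ is called the contact polytope. Note that $\mathbf v+F=\upsilon+F$. *)

From mathcomp Require Import all_boot all_order all_algebra.
Set Implicit Arguments. Unset Strict Implicit. Unset Printing Implicit Defensive.
Import Order.TTheory GRing.Theory Num.Theory.
Local Open Scope ring_scope.

Definition dotv (R : realFieldType) (n : nat) (u w : 'cV[R]_n) : R :=
  \sum_(i < n) u i 0 * w i 0.

Definition vle (R : realFieldType) (n : nat) (u w : 'cV[R]_n) : Prop :=
  forall i, u i 0 <= w i 0.

Definition orthant (R : realFieldType) (n : nat) : 'cV[R]_n -> Prop :=
  fun x => forall i, 0 <= x i 0.

Definition range_mx (R : realFieldType) (n m : nat) (G : 'M[R]_(n, m))
  : 'cV[R]_n -> Prop :=
  fun x => exists y : 'cV[R]_m, x = G *m y.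

Definition cone_hull (R : realFieldType) (n : nat) (S : 'cV[R]_n -> Prop)
  : 'cV[R]_n -> Prop :=
  fun x => exists (k : nat) (c : 'I_k -> R) (s : 'I_k -> 'cV[R]_n),
    (forall j, 0 <= c j) /\ (forall j, S (s j)) /\ x = \sum_(j < k) c j *: s j.

From mathcomp Require Import all_boot all_order all_algebra.
Set Implicit Arguments. Unset Strict Implicit. Unset Printing Implicit Defensive.
Import Order.TTheory GRing.Theory Num.Theory.
Local Open Scope ring_scope.

(* Since v - ups lies in F, every point of P_c is ups plus a point of F, so a
   nonnegative combination with total weight t lies in t ups + F, and in P.
   Conversely, x = t ups + z in P with t > 0 is t times the point x / t of P_c;
   for t = 0 the point x lies in F and in P, hence is 0 because F meets P only
   at 0, which is the empty combination. *)

Section RangeSubspace.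
Variables (R : realFieldType) (n m : nat) (G : 'M[R]_(n, m)).

Lemma range_mx0 : range_mx G 0.
Proof. by exists 0; rewrite mulmx0. Qed.

Lemma range_mxD x y : range_mx G x -> range_mx G y -> range_mx G (x + y).
Proof. by move=> [a ->] [b ->]; exists (a + b); rewrite mulmxDr. Qed.

Lemma range_mxZ a x : range_mx G x -> range_mx G (a *: x).
Proof. by move=> [y ->]; exists (a *: y); rewrite scalemxAr. Qed.

Lemma range_mx_sum k (c : 'I_k -> R) (s : 'I_k -> 'cV[R]_n) :
  (forall j, range_mx G (s j)) -> range_mx G (\sum_(j < k) c j *: s j).
Proof.
move=> hs; apply: (big_ind (range_mx G)); [exact: range_mx0 | exact: range_mxD |].
by move=> j _; apply: range_mxZ.
Qed.

End RangeSubspace.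

Lemma orthantZ (R : realFieldType) n (a : R) (x : 'cV[R]_n) :
  0 <= a -> orthant x -> orthant (a *: x).
Proof. by move=> a0 hx i; rewrite mxE mulr_ge0. Qed.

Lemma orthant_sum (R : realFieldType) n k (c : 'I_k -> R) (s : 'I_k -> 'cV[R]_n) :
  (forall j, 0 <= c j) -> (forall j, orthant (s j)) ->
  orthant (\sum_(j < k) c j *: s j).
Proof.
move=> hc hs i; rewrite summxE; apply: sumr_ge0 => j _.
exact: orthantZ.
Qed.

Section ContactCone.
Variables (R : realFieldType) (n m : nat) (G : 'M[R]_(n, m)) (v u : 'cV[R]_n).
Hypothesis range_v_u : range_mx G (v - u).

Definition contact_polytope (y : 'cV[R]_n) : Prop :=
  (exists z, range_mx G z /\ y = v + z) /\ orthant y.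

Definition ext_cone_orthant (x : 'cV[R]_n) : Prop :=
  (exists (t : R) (z : 'cV[R]_n), 0 <= t /\ range_mx G z /\ x = t *: u + z)
  /\ orthant x.

Lemma affine_translateP y :
  (exists z, range_mx G z /\ y = v + z) <-> range_mx G (y - u).
Proof.
split=> [[z [hz ->]] | hy].
  by rewrite addrAC; apply: range_mxD.
exists (y - v); split; last by rewrite addrC subrK.
have -> : y - v = (y - u) + (-1) *: (v - u).
  by rewrite scaleN1r opprB addrA subrK.
by apply: range_mxD => //; apply: range_mxZ.
Qed.

Lemma cone_hull_contact_sub_ext_cone x : cone_hull contact_polytope x -> ext_cone_orthant x.
Proof.
case=> k [c [s [hc [hs ->]]]].
have hsu j : range_mx G (s j - u) by apply/affine_translateP; case: (hs j).
split; last by apply: orthant_sum => // j; case: (hs j).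
exists (\sum_(j < k) c j), (\sum_(j < k) c j *: (s j - u)).
split; first exact: sumr_ge0.
split; first exact: range_mx_sum.
rewrite scaler_suml -big_split /=.
by apply: eq_bigr => j _; rewrite -scalerDr addrC subrK.
Qed.

Hypothesis range_orthant_eq0 : forall z, range_mx G z -> orthant z -> z = 0.

Lemma ext_cone_orthant_sub_cone_hull x : ext_cone_orthant x -> cone_hull contact_polytope x.
Proof.
case=> [[t [z [t_ge0 [hz ->]]]] hx].
have [t0 | t_neq0] := eqVneq t 0.
  have -> : t *: u + z = 0.
    by apply: range_orthant_eq0; rewrite // t0 scale0r add0r.
  exists 0%N, (fun _ => 0), (fun _ => 0).
  by split; [case | split; [case | rewrite big_ord0]].
exists 1%N, (fun _ => t), (fun _ => t^-1 *: (t *: u + z)).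
split=> //; split; last by rewrite big_ord1 scalerA divff // scale1r.
move=> _; split; last by apply: orthantZ; rewrite ?invr_ge0.
apply/affine_translateP.
by rewrite scalerDr scalerA mulVf // scale1r addrC addKr; apply: range_mxZ.
Qed.

End ContactCone.

Theorem mainTheorem2 (R : realFieldType) (n m : nat) (G : 'M[R]_(n, m))
  (v vF ups : 'cV[R]_n)
  (* v = vF + ups with vF the orthogonal projection of v onto F = R(G)
     and ups the orthogonal projection onto F^perp *)
  (hvF : range_mx G vF)
  (hups : forall z, range_mx G z -> dotv ups z = 0)
  (hdec : v = vF + ups)
  (hups0 : ups != 0)
  (hFP : forall z, range_mx G z -> orthant z -> z = 0)
  (hGne : exists x : 'cV[R]_m, vle (G *m x) v) :
  forall x : 'cV[R]_n,
    cone_hull (fun y => (exists z, range_mx G z /\ y = v + z) /\ orthant y) x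
    <-> ((exists (t : R) (z : 'cV[R]_n),
            0 <= t /\ range_mx G z /\ x = t *: ups + z) /\ orthant x).
Proof.
have range_v_ups : range_mx G (v - ups) by rewrite hdec addrK.
move=> x; split.
- exact: (cone_hull_contact_sub_ext_cone range_v_ups).
- exact: (ext_cone_orthant_sub_cone_hull range_v_ups hFP).
Qed.
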